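(* Let $f(t)\in\mathbb{F}_2[t]$ be irreducible, $f(t)\neq t$, not self-reciprocal, and $R_f=\mathbb{F}_2[t,t^{-1},f(t)^{-1}]$. Let $\varphi$ be an automorphism of $(R_f,+)$ and $\Phi$ an automorphism of $U(R_f)$. (a) If $\Phi(u)\varphi(1)=\varphi(u)$ for all $u\in U(R_f)$, then $\Phi(u)=u$ for all $u\in U(R_f)$. (b) If $\Phi(u)\varphi(1)=\varphi(u^{-1})$ for all $u\in U(R_f)$, then $\Phi(u)=u^{-1}$ for all $u\in U(R_f)$.
   Context: A polynomial $f(t)$ of degree $m$ is self-reciprocal if $t^m f(1/t)=f(t)$. *)

From HB Require Import structures.
From mathcomp Require Import all_boot all_order all_algebra.
From mathcomp Require Import fraction.
Set Implicit Arguments. Unset Strict Implicit. Unset Printing Implicit Defensive.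
Import GRing.Theory.
Local Open Scope ring_scope.

Notation F2poly := {poly 'F_2}.
Notation F2frac := {fraction F2poly}.

Notation tofrac := (@FracField.tofrac F2poly).

(* Reciprocal polynomial t^m f(1/t), m = deg f (coefficient reversal). *)
Definition recip (f : F2poly) : F2poly :=
  \poly_(i < size f) f`_((size f).-1 - i).

Definition self_reciprocal (f : F2poly) : Prop := recip f = f.

(* R_f = F_2[t, t^-1, f^-1], as a subring of F_2(t):
   the elements p / (t^a f^b). *)
Definition in_Rf (f : F2poly) (x : F2frac) : Prop :=
  exists (p : F2poly) (a b : nat),
    x = tofrac p / tofrac ('X^a * f ^+ b).

Definition in_URf (f : F2poly) (x : F2frac) : Prop :=
  in_Rf f x /\ x != 0 /\ in_Rf f x^-1.

Definition add_aut_Rf (f : F2poly) (phi : F2frac -> F2frac) : Prop :=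
  (forall x, in_Rf f x -> in_Rf f (phi x)) /\
  (forall x y, in_Rf f x -> in_Rf f y -> phi (x + y) = phi x + phi y) /\
  (forall x y, in_Rf f x -> in_Rf f y -> phi x = phi y -> x = y) /\
  (forall y, in_Rf f y -> exists2 x, in_Rf f x & phi x = y).

Definition mul_aut_URf (f : F2poly) (Phi : F2frac -> F2frac) : Prop :=
  (forall x, in_URf f x -> in_URf f (Phi x)) /\
  (forall x y, in_URf f x -> in_URf f y -> Phi (x * y) = Phi x * Phi y) /\
  (forall x y, in_URf f x -> in_URf f y -> Phi x = Phi y -> x = y) /\
  (forall y, in_URf f y -> exists2 x, in_URf f x & Phi x = y).

(* Put Psi := Phi in (a) and Psi u := Phi u^-1 in (b); in both cases Psi is an
   automorphism of U(R_f) = {t^x f^y} with phi u = Psi u * phi 1. Since phi is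
   additive and f(t) is a sum of powers of t, this gives Psi(f) = f(Psi(t)).
   Write Psi(t) = t^a f^b and Psi(f) = t^c f^d; bijectivity of Psi on exponents
   gives ad - bc = +-1. Clearing denominators in t^c f^d = f(t^a f^b), neither t
   nor (when b <> 0) f divides the resulting polynomial, so c and d are
   multiples of m = deg f >= 2, and so is ad - bc, a contradiction. Hence b = 0
   and a = +-1; a = -1 would make the reciprocal of f a power of f. So Psi fixes
   t and f, hence every unit. *)

From mathcomp Require Import all_boot all_order all_algebra.
From mathcomp Require Import fraction.
From mathcomp Require Import ring zify.
Import GRing.Theory.
Local Open Scope ring_scope.
Set Implicit Arguments. Unset Strict Implicit.

Lemma F2_neq0_eq1 (x : 'F_2) : x != 0 -> x = 1.
Proof. by case: x => [[|[|n]] Hn] //= _; apply/val_inj. Qed.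

Lemma F2_monic (p : F2poly) : p != 0 -> p \is monic.
Proof. by move=> p0; apply/monicP/F2_neq0_eq1; rewrite lead_coef_eq0. Qed.

Lemma irredp_dvdpM (R : fieldType) (f p q : {poly R}) :
  irreducible_poly f -> f %| p * q -> (f %| p) || (f %| q).
Proof.
move=> f_irr fpq; have [//|fNp] := boolP (f %| p).
have f_cop_p : coprimep f p by rewrite irreducible_poly_coprime.
by rewrite -(Gauss_dvdpr q f_cop_p).
Qed.

Lemma tofrac_div_eq (R : idomainType) (p q d e : R) : d != 0 -> e != 0 ->
  FracField.tofrac p / FracField.tofrac d = FracField.tofrac q / FracField.tofrac e ->
  p * e = q * d.
Proof.
move=> d0 e0 /eqP; rewrite eqr_div ?tofrac_eq0 // -!tofracM.
by rewrite tofrac_eq => /eqP.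
Qed.

Lemma int_posneg (x : int) : exists p n : nat, x = p%:Z - n%:Z /\ (p = 0 \/ n = 0)%N.
Proof.
case: x => n; first by exists n, 0%N; split; [rewrite subr0 | right].
by exists 0%N, n.+1; split; [rewrite NegzE sub0r | left].
Qed.

Lemma absz_mul_eq1 (x y : int) : absz (x * y)%R = 1%N -> absz x = 1%N.
Proof. by rewrite abszM => /eqP; rewrite muln_eq1 => /andP [/eqP]. Qed.

Lemma irredp_mul_eq (R : fieldType) (g p q r : {poly R}) :
  irreducible_poly g -> p * q = g * r ->
  (exists2 p', p = g * p' & p' * q = r) \/ (exists2 q', q = g * q' & p * q' = r).
Proof.
move=> g_irr pqE; have g0 := irredp_neq0 g_irr.
have : g %| p * q by rewrite pqE dvdp_mulr.
move/(irredp_dvdpM g_irr)/orP => [] /dvdpP [s sE]; [left | right]; exists s;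
  rewrite ?sE ?[s * g]mulrC //; apply: (mulfI g0); rewrite -pqE sE; ring.
Qed.

Lemma irredpX (R : fieldType) : irreducible_poly ('X : {poly R}).
Proof. by have := irredp_XsubC (0 : R); rewrite polyC0 subr0. Qed.

Lemma XfM (R : comNzRingType) (f : {poly R}) a b c d :
  ('X^a * f ^+ b) * ('X^c * f ^+ d) = 'X^(a + c) * f ^+ (b + d).
Proof. by rewrite !exprD; ring. Qed.

Section XfPowers.

Variable f : F2poly.
Hypothesis f_irr : irreducible_poly f.

Lemma Xf_factor n k (p q : F2poly) :
  p * q = 'X^n * f ^+ k -> exists i j, p = 'X^i * f ^+ j.
Proof.
elim: n k p q => [|n IHn] k; last first.
  move=> p q; rewrite exprS -mulrA => /(irredp_mul_eq (irredpX _)).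
  case=> [[p' -> /IHn [i [j ->]]] | [q' _ /IHn //]].
  by exists i.+1, j; rewrite exprS mulrA.
elim: k => [|k IHk] p q.
  rewrite !expr0 mulr1 => pq1; exists 0%N, 0%N; rewrite !expr0 mulr1.
  have p0 : p != 0 by apply: contra_eq_neq pq1 => ->; rewrite mul0r eq_sym oner_neq0.
  apply/eqP; rewrite -eqp_monic ?F2_monic ?oner_neq0 //.
  by rewrite -size_poly_eq1 -dvdp1 -pq1 dvdp_mulr.
rewrite exprS mulrCA => /(irredp_mul_eq f_irr).
case=> [[p' -> /IHk [i [j ->]]] | [q' _ /IHk //]].
by exists i, j.+1; rewrite exprS; ring.
Qed.

Hypothesis f_coef0 : f`_0 = 1.

Lemma Xf_horner0 i j : ('X^i * f ^+ j).[0] = (i == 0)%:R.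
Proof. by rewrite hornerM hornerXn horner_exp horner_coef0 f_coef0 expr1n mulr1 expr0n. Qed.

Lemma Xf_inj i j i' j' : 'X^i * f ^+ j = 'X^i' * f ^+ j' -> i = i' /\ j = j'.
Proof.
have X0 : ('X : F2poly) != 0 by rewrite polyX_eq0.
elim: i i' => [|i IH] [|i'] E.
- split => //; move: E; rewrite !expr0 !mul1r => /(congr1 (fun p : F2poly => (size p).-1)).
  rewrite !size_exp => /eqP; rewrite eqn_mul2l => /orP [/eqP|/eqP] //.
  by have := f_irr.1; case: (size f) => [|[|s]].
- by move: (congr1 (horner^~ (0 : 'F_2)) E); rewrite !Xf_horner0 => /eqP; rewrite oner_eq0.
- by move: (congr1 (horner^~ (0 : 'F_2)) E); rewrite !Xf_horner0 => /eqP; rewrite eq_sym oner_eq0.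
- have [-> ->] // : i = i' /\ j = j'.
  by apply: IH; apply: (mulfI X0); rewrite !mulrA -!exprS.
Qed.

Lemma Xn_ndvd n : ~~ (f %| 'X^n).
Proof.
apply/negP => /dvdpP [r rE].
have /Xf_factor [i [j rij]] : r * f = 'X^n * f ^+ 0 by rewrite expr0 mulr1.
by move: rE; rewrite rij -mulrA -exprSr -[X in X = _]mulr1 -(expr0 f) => /Xf_inj [].
Qed.

End XfPowers.

Lemma size_recip (f : F2poly) : f`_0 != 0 -> size (recip f) = size f.
Proof. by move=> f00; rewrite size_poly_eq // subnn. Qed.

Lemma recip_neq_exp (f : F2poly) j : f`_0 != 0 -> (1 < size f)%N ->
  ~ self_reciprocal f -> recip f != f ^+ j.
Proof.
move=> f00 f_size f_nrecip; apply/eqP => fjE; apply: f_nrecip.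
suff j1 : j = 1%N by rewrite /self_reciprocal fjE j1 expr1.
have := congr1 (fun p : F2poly => (size p).-1) fjE; rewrite /= size_recip // size_exp.
by case: (size f) f_size => [|[|n]] //= _; nia.
Qed.

Section IrreducibleF2.

Variable f : F2poly.
Hypothesis f_irr : irreducible_poly f.

Lemma lead_coef_F2 : lead_coef f = 1.
Proof. by apply: F2_neq0_eq1; rewrite lead_coef_eq0 irredp_neq0. Qed.

Lemma irredp_coef0 : f != 'X -> f`_0 = 1.
Proof.
move=> fNX; apply: F2_neq0_eq1; apply: contra_neq fNX => f00.
have : 'X %| f by rewrite -(subr0 'X) -polyC0 -root_factor_theorem /root horner_coef0 f00.
move/(f_irr _); rewrite size_polyX => /(_ isT).
by rewrite eqp_monic ?monicX ?F2_monic ?irredp_neq0 // => /eqP.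
Qed.

Lemma irredp_size_gt2 : f`_0 = 1 -> ~ self_reciprocal f -> (2 < size f)%N.
Proof.
move=> f_coef0 f_nrecip; rewrite ltn_neqAle f_irr.1 andbT; apply/negP => /eqP f_size.
apply: f_nrecip; apply/polyP => i; rewrite /recip coef_poly -f_size.
have f_coef1 : f`_1 = 1 by rewrite -lead_coef_F2 lead_coefE -f_size.
by case: i => [|[|i]] //=; rewrite ?f_coef0 ?f_coef1 // nth_default // -f_size.
Qed.

Lemma irredp_root1 : (2 < size f)%N -> ~~ root f 1.
Proof.
move=> f_size; apply/negP; rewrite root_factor_theorem => /(f_irr _).
rewrite size_XsubC => /(_ isT).
by move/eqp_size; rewrite size_XsubC => fE; move: f_size; rewrite -fE.
Qed.

End IrreducibleF2.

Definition tX : F2frac := tofrac 'X.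

Definition mono (f : F2poly) (x y : int) : F2frac := tX ^ x * tofrac f ^ y.

Lemma tX_neq0 : tX != 0.
Proof. by rewrite tofrac_eq0 polyX_eq0. Qed.

Section Monomials.

Variable f : F2poly.

Lemma monoX x y z : mono f x y ^ z = mono f (x * z) (y * z).
Proof. by rewrite /mono expfzMl !exprz_exp. Qed.

Lemma mono00 : mono f 0 0 = 1.
Proof. by rewrite /mono !expr0z mulr1. Qed.

Lemma mono10 : mono f 1 0 = tX.
Proof. by rewrite /mono expr1z expr0z mulr1. Qed.

Lemma mono01 : mono f 0 1 = tofrac f.
Proof. by rewrite /mono expr1z expr0z mul1r. Qed.

Lemma mono_nat (i j : nat) : mono f i j = tofrac ('X^i * f ^+ j).
Proof. by rewrite /mono tofracM !tofracXn. Qed.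

Hypothesis f_neq0 : f != 0.

Lemma tofrac_f_neq0 : tofrac f != 0.
Proof. by rewrite tofrac_eq0. Qed.

Lemma Xf_neq0 i j : 'X^i * f ^+ j != 0.
Proof. by rewrite mulf_neq0 ?expf_neq0 ?polyX_eq0. Qed.

Lemma mono_neq0 x y : mono f x y != 0.
Proof. by apply: mulf_neq0; apply: expfz_neq0; [exact: tX_neq0 | exact: tofrac_f_neq0]. Qed.

Lemma monoD x y x' y' : mono f x y * mono f x' y' = mono f (x + x') (y + y').
Proof. by rewrite /mono (expfzDr _ _ tX_neq0) (expfzDr _ _ tofrac_f_neq0) mulrACA. Qed.

Lemma mono_frac (x y : int) (xp xn yp yn : nat) :
  x = xp%:Z - xn%:Z -> y = yp%:Z - yn%:Z ->
  mono f x y = tofrac ('X^xp * f ^+ yp) / tofrac ('X^xn * f ^+ yn).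
Proof.
move=> -> ->; rewrite /mono (expfzDr _ _ tX_neq0) (expfzDr _ _ tofrac_f_neq0).
by rewrite -!exprnN !tofracM !tofracXn invfM mulrACA.
Qed.

Lemma in_URf_mono x y : in_URf f (mono f x y).
Proof.
have [xp [xn [xE _]]] := int_posneg x; have [yp [yn [yE _]]] := int_posneg y.
rewrite (mono_frac xE yE); split; last split.
- by exists ('X^xp * f ^+ yp), xn, yn.
- by rewrite -(mono_frac xE yE) mono_neq0.
- by rewrite invf_div; exists ('X^xn * f ^+ yn), xp, yp.
Qed.

End Monomials.

Section MonomialsIrreducible.

Variable f : F2poly.
Hypotheses (f_irr : irreducible_poly f) (f_coef0 : f`_0 = 1).
Let f_neq0 : f != 0 := irredp_neq0 f_irr.

Lemma mono_exponents_inj x y x' y' : mono f x y = mono f x' y' -> x = x' /\ y = y'.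
Proof.
have [xp [xn [xE _]]] := int_posneg x; have [yp [yn [yE _]]] := int_posneg y.
have [xp' [xn' [xE' _]]] := int_posneg x'; have [yp' [yn' [yE' _]]] := int_posneg y'.
rewrite (mono_frac f_neq0 xE yE) (mono_frac f_neq0 xE' yE').
move=> /(tofrac_div_eq (Xf_neq0 f_neq0 _ _) (Xf_neq0 f_neq0 _ _)); rewrite !XfM.
by move=> /(Xf_inj f_irr f_coef0) [? ?]; rewrite xE xE' yE yE'; lia.
Qed.

Lemma tofrac_eq_mono (p : F2poly) x y : tofrac p = mono f x y ->
  exists i j : nat, [/\ p = 'X^i * f ^+ j, x = i & y = j].
Proof.
have [xp [xn [xE _]]] := int_posneg x; have [yp [yn [yE _]]] := int_posneg y.
rewrite (mono_frac f_neq0 xE yE) -[tofrac p]divr1 -tofrac1.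
move=> /(tofrac_div_eq (oner_neq0 _) (Xf_neq0 f_neq0 _ _)); rewrite mulr1 => pE.
have [i [j pij]] := Xf_factor f_irr pE.
move: pE; rewrite pij XfM.
by move=> /(Xf_inj f_irr f_coef0) [? ?]; exists i, j; split; rewrite // ?xE ?yE; lia.
Qed.

End MonomialsIrreducible.

Section UnitsOfRf.

Variable f : F2poly.
Hypothesis f_irr : irreducible_poly f.
Let f_neq0 : f != 0 := irredp_neq0 f_irr.

Lemma in_URfP u : in_URf f u <-> exists x y, u = mono f x y.
Proof.
split=> [[[p [a [b uE]]] [u0 [q [c [d vE]]]]] | [x [y ->]]]; last exact: in_URf_mono.
have : tofrac (p * q) / tofrac ('X^a * f ^+ b * ('X^c * f ^+ d)) = tofrac 1 / tofrac 1.
  by rewrite (tofracM p) (tofracM ('X^a * _)) -mulf_div -uE -vE mulfV // tofrac1 divr1.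
have D0 : 'X^a * f ^+ b * ('X^c * f ^+ d) != 0 by rewrite mulf_neq0 ?(Xf_neq0 f_neq0).
move=> /(tofrac_div_eq D0 (oner_neq0 _)); rewrite mulr1 mul1r XfM.
move=> /(Xf_factor f_irr) [i [j pE]]; exists (i%:Z - a%:Z), (j%:Z - b%:Z).
by rewrite (mono_frac f_neq0 (erefl _) (erefl _)) uE pE.
Qed.

End UnitsOfRf.

Lemma in_Rf_tofrac (f p : F2poly) : in_Rf f (tofrac p).
Proof. by exists p, 0%N, 0%N; rewrite !expr0 mulr1 tofrac1 divr1. Qed.

Lemma in_URf_inv (f : F2poly) u : in_URf f u -> in_URf f u^-1.
Proof. by move=> [uR [u0 uVR]]; split; [|split; rewrite ?invr_neq0 ?invrK]. Qed.

Lemma mul_aut_URf_inv (f : F2poly) Phi :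
  mul_aut_URf f Phi -> mul_aut_URf f (fun u => Phi u^-1).
Proof.
move=> [PhiU [PhiM [Phi_inj Phi_surj]]]; split; last split; last split.
- by move=> x /in_URf_inv /PhiU.
- by move=> x y xU yU; rewrite invfM PhiM //; exact: in_URf_inv.
- by move=> x y xU yU /(Phi_inj _ _ (in_URf_inv xU) (in_URf_inv yU)) /invr_inj.
- move=> y /Phi_surj [x xU <-]; exists x^-1; rewrite ?invrK //.
  exact: in_URf_inv.
Qed.

Section AdditiveAutomorphism.

Variables (f : F2poly) (phi : F2frac -> F2frac).
Hypothesis phi_aut : add_aut_Rf f phi.

Lemma add_aut_0 : phi 0 = 0.
Proof.
have [_ [phiD _]] := phi_aut; have R0 : in_Rf f 0 by rewrite -tofrac0; apply: in_Rf_tofrac.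
by apply: (addrI (phi 0)); rewrite -phiD // !addr0.
Qed.

Lemma add_aut_1_neq0 : phi 1 != 0.
Proof.
have [_ [_ [phi_inj _]]] := phi_aut; apply/eqP => phi1.
have R0 : in_Rf f 0 by rewrite -tofrac0; apply: in_Rf_tofrac.
have R1 : in_Rf f 1 by rewrite -tofrac1; apply: in_Rf_tofrac.
by have /eqP := phi_inj 1 0 R1 R0 (etrans phi1 (esym add_aut_0)); rewrite oner_eq0.
Qed.

Lemma add_aut_sum (I : Type) (r : seq I) (P : pred I) (g : I -> F2poly) :
  phi (tofrac (\sum_(i <- r | P i) g i)) = \sum_(i <- r | P i) phi (tofrac (g i)).
Proof.
have [_ [phiD _]] := phi_aut.
apply: (big_morph (fun p => phi (tofrac p))) => [p q|]; last by rewrite tofrac0 add_aut_0.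
by rewrite tofracD phiD //; apply: in_Rf_tofrac.
Qed.

End AdditiveAutomorphism.

Section MultiplicativeAutomorphism.

Variables (f : F2poly) (Psi : F2frac -> F2frac).
Hypotheses (f_neq0 : f != 0) (Psi_aut : mul_aut_URf f Psi).

Lemma mul_aut_1 : Psi 1 = 1.
Proof.
have [PsiU [PsiM _]] := Psi_aut; have oneU : in_URf f 1 by rewrite -(mono00 f); apply: in_URf_mono.
have [_ [Psi1_neq0 _]] := PsiU 1 oneU.
by apply: (mulfI Psi1_neq0); rewrite -PsiM // !mulr1.
Qed.

Lemma mul_aut_expz w z : (forall z, in_URf f (w ^ z)) -> Psi (w ^ z) = Psi w ^ z.
Proof.
move=> wU; have [_ [PsiM _]] := Psi_aut.
have Psi_expn (n : nat) : Psi (w ^+ n) = Psi w ^+ n.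
  elim: n => [|n IHn]; first by rewrite !expr0 mul_aut_1.
  by rewrite !exprS PsiM ?IHn //; [exact: (wU 1) | exact: (wU n)].
case: z => n; first exact: Psi_expn.
have [_ [w_neq0 _]] := wU 1; rewrite expr1z in w_neq0.
have : Psi (w ^ Negz n) * Psi w ^+ n.+1 = 1.
  rewrite -Psi_expn -PsiM; last exact: (wU n.+1); last exact: (wU (Negz n)).
  by rewrite NegzE -exprnN mulVf ?expf_neq0 // mul_aut_1.
move=> PsiV; have Psi_neq0 : Psi w ^+ n.+1 != 0.
  by apply: contraNneq (oner_neq0 F2frac) => eq0; rewrite -PsiV eq0 mulr0.
by rewrite NegzE -exprnN -[LHS]mulr1 -(mulfV Psi_neq0) mulrA PsiV mul1r.
Qed.

Lemma mul_aut_mono x y : Psi (mono f x y) = Psi tX ^ x * Psi (tofrac f) ^ y.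
Proof.
have [_ [PsiM _]] := Psi_aut.
have tXU z : in_URf f (tX ^ z) by rewrite -(mono10 f) monoX mul0r; apply: in_URf_mono.
have fU z : in_URf f (tofrac f ^ z) by rewrite -(mono01 f) monoX mul0r; apply: in_URf_mono.
by rewrite PsiM // !mul_aut_expz.
Qed.

End MultiplicativeAutomorphism.

Section Homogenization.

Variable R : comNzRingType.
Implicit Types f N D : {poly R}.

Definition homog f N D : {poly R} :=
  \sum_(k < size f) f`_k *: (N ^+ k * D ^+ ((size f).-1 - k)).

Lemma homog_horner0 f N D :
  (homog f N D).[0] = \sum_(k < size f) f`_k * (N.[0] ^+ k * D.[0] ^+ ((size f).-1 - k)).
Proof.
by rewrite horner_sum; apply: eq_bigr => k _; rewrite hornerZ hornerM !horner_exp.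
Qed.

Lemma homog_horner0_coef0 f N D : N.[0] = 0 -> D.[0] = 1 -> (homog f N D).[0] = f`_0.
Proof.
move=> N0 D0; rewrite homog_horner0 N0 D0.
case sf: (size f) => [|n]; first by rewrite big_ord0 nth_default ?sf.
rewrite big_ord_recl /= expr0 expr1n !mulr1 big1 ?addr0 // => k _.
by rewrite expr0n /= mul0r mulr0.
Qed.

Lemma homog_horner0_lead f N D : N.[0] = 1 -> D.[0] = 0 -> (homog f N D).[0] = lead_coef f.
Proof.
move=> N0 D0; rewrite homog_horner0 N0 D0 lead_coefE.
case sf: (size f) => [|n]; first by rewrite big_ord0 nth_default ?sf.
rewrite big_ord_recr /= subnn expr0 expr1n !mulr1 big1 ?add0r // => k _.
by rewrite expr0n subn_eq0 leqNgt ltn_ord /= !mulr0.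
Qed.

Lemma homog_horner0_at1 f N D : N.[0] = 1 -> D.[0] = 1 -> (homog f N D).[0] = f.[1].
Proof.
move=> N0 D0; rewrite homog_horner0 N0 D0 horner_coef.
by apply: eq_bigr => k _; rewrite !expr1n mulr1.
Qed.

Lemma homog_coef0_split f N D : f`_0 = 1 -> (0 < size f)%N ->
  exists Q, homog f N D = D ^+ (size f).-1 + N * Q.
Proof.
rewrite /homog; case: (size f) => [//|n] f0 _.
rewrite big_ord_recl f0 scale1r expr0 mul1r subn0.
exists (\sum_(k < n) f`_(bump 0 k) *: (N ^+ k * D ^+ (n - bump 0 k))).
by rewrite mulr_sumr; congr (_ + _); apply: eq_bigr => k _; rewrite exprS -scalerAr mulrA.
Qed.

Lemma homog_lead_split f N D : lead_coef f = 1 ->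
  exists Q, homog f N D = N ^+ (size f).-1 + D * Q.
Proof.
rewrite /homog lead_coefE; case sf: (size f) => [|n] /= fl.
  by move: fl; rewrite nth_default ?sf // => /esym/eqP; rewrite oner_eq0.
rewrite big_ord_recr /= fl subnn expr0 mulr1 scale1r addrC.
exists (\sum_(k < n) f`_k *: (N ^+ k * D ^+ (n - k).-1)).
rewrite mulr_sumr; congr (_ + _); apply: eq_bigr => k _.
by rewrite -scalerAr; congr (_ *: _); rewrite mulrCA -exprS prednK // subn_gt0.
Qed.

End Homogenization.

Lemma homog_recip (f : F2poly) : homog f 1 'X = recip f.
Proof.
apply/polyP => i; rewrite /homog /recip coef_sum coef_poly.
case: (size f) => [|n] /=; first by rewrite big_ord0.
under eq_bigr => k _ do rewrite expr1n mul1r coefZ coefXn.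
have [i_lt|i_ge] := ltnP i n.+1; last first.
  rewrite big1 // => k _; case: eqP => [iE|_]; last by rewrite mulr0.
  by move: i_ge; rewrite iE leqNgt ltnS leq_subr.
have ni_lt : (n - i < n.+1)%N by rewrite ltnS leq_subr.
rewrite (bigD1 (Ordinal ni_lt)) //= subKn; last by rewrite -ltnS.
rewrite eqxx mulr1 big1 ?addr0 // => k /eqP kNi; case: eqP => [iE|_]; last by rewrite mulr0.
by case: kNi; apply: val_inj; rewrite /= iE subKn ?leq_ord.
Qed.

Definition frac_horner (f : F2poly) (w : F2frac) : F2frac :=
  \sum_(k < size f) tofrac (f`_k)%:P * w ^+ k.

Lemma frac_horner_tX (f : F2poly) : frac_horner f tX = tofrac f.
Proof.
rewrite /frac_horner -[f in RHS]coefK poly_def (big_morph _ (@tofracD _) (@tofrac0 _)).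
by apply: eq_bigr => k _; rewrite -mul_polyC tofracM tofracXn.
Qed.

Lemma tofrac_homog (f N D : F2poly) : tofrac D != 0 ->
  tofrac (homog f N D) = frac_horner f (tofrac N / tofrac D) * tofrac D ^+ (size f).-1.
Proof.
move=> D0; rewrite /homog /frac_horner (big_morph _ (@tofracD _) (@tofrac0 _)) mulr_suml.
apply: eq_bigr => k _.
rewrite -mul_polyC !tofracM !tofracXn -mulrA expr_div_n; congr (_ * _).
have k_le : (k <= (size f).-1)%N by rewrite -ltnS (ltn_predK (ltn_ord k)).
rewrite [in RHS](_ : (size f).-1 = k + ((size f).-1 - k))%N; last by rewrite subnKC.
by rewrite exprD mulrA divfK; last exact: expf_neq0.
Qed.

Section MonomialComposition.

Variable f : F2poly.
Hypotheses (f_irr : irreducible_poly f) (f_coef0 : f`_0 = 1).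

Local Notation m := (size f).-1.

Lemma homog_Xf_eq (ap an bp bn : nat) (c d : int) :
  mono f c d = frac_horner f (mono f (ap%:Z - an%:Z) (bp%:Z - bn%:Z)) ->
  exists i j : nat,
    [/\ homog f ('X^ap * f ^+ bp) ('X^an * f ^+ bn) = 'X^i * f ^+ j,
        c + (an * m)%N = i & d + (bn * m)%N = j].
Proof.
have f0 := irredp_neq0 f_irr.
have D0 : tofrac ('X^an * f ^+ bn) != 0 by rewrite tofrac_eq0 Xf_neq0.
move=> cdE; apply: (tofrac_eq_mono f_irr f_coef0).
rewrite tofrac_homog // -(mono_frac f0 (erefl _) (erefl _)) -cdE -mono_nat.
by rewrite exprnP monoX -!PoszM monoD.
Qed.

Hypothesis f_root1 : ~~ root f 1.

Lemma homog_Xf_horner0 (ap an bp bn : nat) : (ap = 0 \/ an = 0)%N ->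
  (homog f ('X^ap * f ^+ bp) ('X^an * f ^+ bn)).[0] != 0.
Proof.
move=> apn; have [ap0|ap_neq0] := eqVneq ap 0%N; have [an0|an_neq0] := eqVneq an 0%N.
- by rewrite homog_horner0_at1 ?Xf_horner0 ?ap0 ?an0.
- by rewrite homog_horner0_lead ?Xf_horner0 ?ap0 ?(negPf an_neq0) ?lead_coef_F2 ?oner_neq0.
- by rewrite homog_horner0_coef0 ?Xf_horner0 ?an0 ?(negPf ap_neq0) ?f_coef0 ?oner_neq0.
- by case: apn => /eqP; rewrite ?(negPf ap_neq0) ?(negPf an_neq0).
Qed.

Lemma homog_Xf_eq_exp (ap an bp bn : nat) (c d : int) : (ap = 0 \/ an = 0)%N ->
  mono f c d = frac_horner f (mono f (ap%:Z - an%:Z) (bp%:Z - bn%:Z)) ->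
  exists j : nat,
    [/\ homog f ('X^ap * f ^+ bp) ('X^an * f ^+ bn) = f ^+ j,
        c + (an * m)%N = 0 & d + (bn * m)%N = j].
Proof.
move=> apn /homog_Xf_eq [i [j [hE ciE djE]]]; exists j.
suff i0 : i = 0%N by rewrite hE ciE i0 expr0 mul1r.
apply/eqP; move: (homog_Xf_horner0 bp bn apn); rewrite hE Xf_horner0 //.
by apply: contraNT => /negPf ->; rewrite eqxx.
Qed.

Lemma homog_Xf_ndvd (ap an bp bn : nat) : (bp = 0 \/ bn = 0)%N -> (bp != 0) || (bn != 0) ->
  ~~ (f %| homog f ('X^ap * f ^+ bp) ('X^an * f ^+ bn)).
Proof.
have f_dvd_Xf i j : (0 < j)%N -> f %| 'X^i * f ^+ j.
  by move=> j_gt0; rewrite dvdp_mull // dvdp_exp.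
case=> ->; rewrite ?orbF /= -lt0n => b_gt0.
- have [Q ->] := homog_lead_split ('X^ap * f ^+ 0) ('X^an * f ^+ bn) (lead_coef_F2 f_irr).
  by rewrite dvdp_addl; [|exact/dvdp_mulr/f_dvd_Xf]; rewrite (expr0 f) mulr1 -exprM Xn_ndvd.
- have f_size : (0 < size f)%N by rewrite size_poly_gt0 irredp_neq0.
  have [Q ->] := homog_coef0_split ('X^ap * f ^+ bp) ('X^an * f ^+ 0) f_coef0 f_size.
  by rewrite dvdp_addl; [|exact/dvdp_mulr/f_dvd_Xf]; rewrite (expr0 f) mulr1 -exprM Xn_ndvd.
Qed.

Hypothesis f_size : (2 < size f)%N.

(* Both sides are cleared of denominators by (t^an f^bn)^m: the value at 0 and
   divisibility by f then force c = -an m and d = -bn m, so m >= 2 divides ad - bc. *)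
Lemma frac_horner_mono_b0 (a b c d : int) : absz (a * d - b * c)%R = 1%N ->
  mono f c d = frac_horner f (mono f a b) -> b = 0.
Proof.
move=> det; have [ap [an [aE apn]]] := int_posneg a; have [bp [bn [bE bpn]]] := int_posneg b.
rewrite aE bE => /(homog_Xf_eq_exp apn) [j [hE cE djE]].
have [b_neq0|] := boolP ((bp != 0) || (bn != 0)); last first.
  by rewrite negb_or !negbK => /andP [/eqP -> /eqP ->].
have j0 : j = 0%N.
  apply/eqP; apply: contraNT (homog_Xf_ndvd ap an bpn b_neq0) => j_neq0.
  by rewrite hE dvdp_exp ?lt0n ?dvdpp.
have m2 : (2 <= (size f).-1)%N by rewrite -ltnS (ltn_predK f_size).
have {}cE : c = - (an * (size f).-1)%N%:Z by apply/eqP; rewrite -addr_eq0 cE.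
have dE : d = - (bn * (size f).-1)%N%:Z by apply/eqP; rewrite -addr_eq0 djE j0.
have detE : a * d - b * c = (size f).-1%:Z * (an%:Z * bp%:Z - ap%:Z * bn%:Z).
  by rewrite aE bE cE dE !PoszM; ring.
by move: det; rewrite detE => /absz_mul_eq1 /= m1; move: m2; rewrite m1.
Qed.

Hypothesis f_nrecip : ~ self_reciprocal f.

(* For a = -1 the identity reads t^c f^d = f(1/t), i.e. recip f is a power of f. *)
Lemma frac_horner_mono_a1 (a c d : int) : absz (a * d)%R = 1%N ->
  mono f c d = frac_horner f (mono f a 0) -> a = 1.
Proof.
move=> /absz_mul_eq1 a1; have [ap [an [aE apn]]] := int_posneg a.
have : (ap = 1 /\ an = 0 \/ ap = 0 /\ an = 1)%N by move: a1; rewrite aE; lia.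
case=> [[ap1 an0] | [ap0 an1]]; first by rewrite aE ap1 an0.
rewrite aE ap0 an1 -[X in frac_horner _ (mono _ _ X)](subrr 0%:Z).
move=> /(homog_Xf_eq_exp (or_introl erefl)) [j [hE _ _]].
move: hE; rewrite !expr0 !mulr1 expr1 homog_recip => /eqP.
by rewrite (negPf (recip_neq_exp j _ _ f_nrecip)) // ?f_coef0 ?oner_neq0 // ltnW.
Qed.

End MonomialComposition.

Section MultiplicativeAutomorphismExponents.

Variables (f : F2poly) (Psi : F2frac -> F2frac).
Hypotheses (f_irr : irreducible_poly f) (f_coef0 : f`_0 = 1).
Hypothesis Psi_aut : mul_aut_URf f Psi.
Let f_neq0 : f != 0 := irredp_neq0 f_irr.

Lemma mul_aut_det (a b c d : int) :
  Psi tX = mono f a b -> Psi (tofrac f) = mono f c d -> absz (a * d - b * c)%R = 1%N.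
Proof.
move=> tXE fE; have [PsiU [_ [_ Psi_surj]]] := Psi_aut.
have PsiE x y : Psi (mono f x y) = mono f (a * x + c * y) (b * x + d * y).
  by rewrite mul_aut_mono // tXE fE !monoX monoD.
have tXU : in_URf f tX by rewrite -(mono10 f); apply: in_URf_mono.
have fU : in_URf f (tofrac f) by rewrite -(mono01 f); apply: in_URf_mono.
have [_ /(in_URfP f_irr) [i [j ->]] tXE'] := Psi_surj _ tXU.
have [_ /(in_URfP f_irr) [k [l ->]] fE'] := Psi_surj _ fU.
move: tXE' fE'; rewrite !PsiE -{1}(mono10 f) -{1}(mono01 f).
move=> /(mono_exponents_inj f_irr f_coef0) [e1 e2] /(mono_exponents_inj f_irr f_coef0) [e3 e4].
(* Psi acts on exponents by [[a, c], [b, d]], and [[i, k], [j, l]] is a right inverse. *)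
apply: (@absz_mul_eq1 _ (i * l - j * k)).
have -> : (a * d - b * c) * (i * l - j * k) =
          (a * i + c * j) * (b * k + d * l) - (b * i + d * j) * (a * k + c * l) by ring.
by rewrite e1 e2 e3 e4 mul1r mul0r subr0.
Qed.

End MultiplicativeAutomorphismExponents.

Section IntertwinedAutomorphisms.

Variables (f : F2poly) (phi Psi : F2frac -> F2frac).
Hypotheses (f_irr : irreducible_poly f) (f_neqX : f != 'X) (f_nrecip : ~ self_reciprocal f).
Hypotheses (phi_aut : add_aut_Rf f phi) (Psi_aut : mul_aut_URf f Psi).
Hypothesis Psi_phi : forall u, in_URf f u -> Psi u * phi 1 = phi u.

Let f_neq0 : f != 0 := irredp_neq0 f_irr.
Let f_coef0 : f`_0 = 1 := irredp_coef0 f_irr f_neqX.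
Let f_size : (2 < size f)%N := irredp_size_gt2 f_irr f_coef0 f_nrecip.
Let f_root1 : ~~ root f 1 := irredp_root1 f_irr f_size.

Lemma mul_aut_frac_horner : Psi (tofrac f) = frac_horner f (Psi tX).
Proof.
(* phi (t^k) = Psi t ^+ k * phi 1, and phi is additive. *)
apply: (mulIf (add_aut_1_neq0 phi_aut)).
rewrite Psi_phi -?(mono01 f); last exact: in_URf_mono.
rewrite mono01 -[f in tofrac f]coefK poly_def (add_aut_sum phi_aut) /frac_horner mulr_suml.
apply: eq_bigr => k _; have [->|/F2_neq0_eq1 ->] := eqVneq f`_k 0.
  by rewrite scale0r polyC0 tofrac0 (add_aut_0 phi_aut) !mul0r.
have XkE : tofrac 'X^k = mono f k 0 by rewrite mono_nat expr0 mulr1.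
rewrite scale1r polyC1 tofrac1 mul1r XkE -Psi_phi; last exact: in_URf_mono.
by rewrite mul_aut_mono // expr0z mulr1.
Qed.

Lemma mul_aut_tX : Psi tX = tX.
Proof.
have [PsiU _] := Psi_aut.
have [a [b tXE]] : exists a b, Psi tX = mono f a b.
  by apply/(in_URfP f_irr)/PsiU; rewrite -(mono10 f); apply: in_URf_mono.
have [c [d fE]] : exists c d, Psi (tofrac f) = mono f c d.
  by apply/(in_URfP f_irr)/PsiU; rewrite -(mono01 f); apply: in_URf_mono.
have det := mul_aut_det f_irr f_coef0 Psi_aut tXE fE.
have comp : mono f c d = frac_horner f (mono f a b) by rewrite -fE -tXE mul_aut_frac_horner.
have b0 := frac_horner_mono_b0 f_irr f_coef0 f_root1 f_size det comp.
rewrite b0 mul0r subr0 in det comp.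
have a1 := frac_horner_mono_a1 f_irr f_coef0 f_root1 f_size f_nrecip det comp.
by rewrite tXE a1 b0 mono10.
Qed.

Lemma mul_aut_id u : in_URf f u -> Psi u = u.
Proof.
have PsiF : Psi (tofrac f) = tofrac f.
  by rewrite mul_aut_frac_horner mul_aut_tX frac_horner_tX.
move=> /(in_URfP f_irr) [x [y ->]].
by rewrite mul_aut_mono // mul_aut_tX PsiF.
Qed.

End IntertwinedAutomorphisms.

Unset Implicit Arguments.

Theorem mainTheorem15 (f : {poly 'F_2}) (phi Phi : {fraction {poly 'F_2}} -> {fraction {poly 'F_2}}) :
  irreducible_poly f -> f != 'X -> ~ self_reciprocal f ->
  add_aut_Rf f phi -> mul_aut_URf f Phi ->
  ((forall u, in_URf f u -> Phi u * phi 1 = phi u) ->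
     forall u, in_URf f u -> Phi u = u) /\
  ((forall u, in_URf f u -> Phi u * phi 1 = phi u^-1) ->
     forall u, in_URf f u -> Phi u = u^-1).
Proof.
move=> f_irr f_neqX f_nrecip phi_aut Phi_aut; split=> [Phi_phi | Phi_phi u uU].
  exact: mul_aut_id f_irr f_neqX f_nrecip phi_aut Phi_aut Phi_phi.
have PhiV_phi v : in_URf f v -> Phi v^-1 * phi 1 = phi v.
  by move=> vU; rewrite Phi_phi ?invrK //; apply: in_URf_inv.
have PhiV_aut := mul_aut_URf_inv Phi_aut.
have := mul_aut_id f_irr f_neqX f_nrecip phi_aut PhiV_aut PhiV_phi (in_URf_inv uU).
by rewrite invrK.
Qed.
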